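(* Let $W_1,\dots,W_m\in\mathbb{R}^{n\times n}$ be signed adjacency matrices of signed digraphs $\mathcal{G}_1,\dots,\mathcal{G}_m$ with $W_k\mathbf{1}=W_k^\top\mathbf{1}=\mathbf{1}$ for all $k$. If $\mathbb{W}=\{W_1,\dots,W_m\}$ is a consensus set for the switched system $\mathbf{x}(t+1)=W_{\sigma(t)}\mathbf{x}(t)$, then for every $k$, $W_k$ is eventually doubly stochastic (hence eventually positive) and $\mathcal{G}_k$ is strongly connected.
   Context: $W_k$ are real matrices (entries of any sign); $\mathcal{G}_k$ has an edge from $j$ to $i$ iff $[W_k]_{ij}\neq 0$. $W$ is eventually positive if there is $t_0\in\mathbb{Z}_{\ge0}$ with $W^t$ entrywise positive for all integers $t\ge t_0$; eventually doubly stochastic means eventually positive with $W\mathbf{1}=W^\top\mathbf{1}=\mathbf{1}$. A switching signal is any map $\sigma:\mathbb{Z}_{\ge0}\to\{1,\dots,m\}$. $\mathbb{W}$ is a consensus set if for every switching signal and every $\mathbf{x}(0)$ there is $\alpha\in\mathbb{R}$ with $\lim_{t\to\infty}\mathbf{x}(t)=\alpha\mathbf{1}$. *)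

From mathcomp Require Import all_boot all_order all_algebra.
From mathcomp Require Import all_classical all_reals all_analysis.
Import Order.TTheory GRing.Theory Num.Theory.
Import numFieldNormedType.Exports.
Set Implicit Arguments. Unset Strict Implicit. Unset Printing Implicit Defensive.
Local Open Scope classical_set_scope.
Local Open Scope ring_scope.

Definition ones (R : realType) (n : nat) : 'cV[R]_n := const_mx 1.

Definition row_col_sums_one (R : realType) (n : nat) (W : 'M[R]_n) : Prop :=
  W *m ones R n = ones R n /\ W^T *m ones R n = ones R n.

Definition eventually_positive (R : realType) (n : nat) (W : 'M[R]_n) : Prop :=
  exists t0 : nat, forall t : nat, (t0 <= t)%N ->
    forall i j : 'I_n, 0 < (W ^+ t) i j.

Definition eventually_doubly_stochastic (R : realType) (n : nat) (W : 'M[R]_n) : Prop :=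
  eventually_positive W /\ row_col_sums_one W.

Definition digraph_edge (R : realType) (n : nat) (W : 'M[R]_n) : rel 'I_n :=
  fun j i => W i j != 0.

Definition strongly_connected (R : realType) (n : nat) (W : 'M[R]_n) : Prop :=
  forall i j : 'I_n, connect (digraph_edge W) i j.

Fixpoint traj (R : realType) (n m : nat) (W : 'I_m -> 'M[R]_n)
  (sigma : nat -> 'I_m) (x0 : 'cV[R]_n) (t : nat) : 'cV[R]_n :=
  match t with
  | 0 => x0
  | t'.+1 => W (sigma t') *m traj W sigma x0 t'
  end.

Definition consensus_set (R : realType) (n m : nat) (W : 'I_m -> 'M[R]_n) : Prop :=
  forall (sigma : nat -> 'I_m) (x0 : 'cV[R]_n),
    exists alpha : R, traj W sigma x0 t @[t --> \oo] --> alpha *: ones R n.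

From mathcomp Require Import all_boot all_order all_algebra.
From mathcomp Require Import all_classical all_reals all_analysis.
Import Order.TTheory GRing.Theory Num.Theory.
Import numFieldNormedType.Exports.
Local Open Scope classical_set_scope.
Local Open Scope ring_scope.

(* Under the constant switching signal t |-> k the consensus hypothesis says that
   every column W_k^t e_j of the powers of W_k converges to a multiple a 1 of the
   all-ones vector.  Since W_k has unit column sums, so has W_k^t; passing to the
   limit in the column sum gives n a = 1, hence a = 1/n > 0.  So every entry of
   W_k^t is eventually positive, and a positive entry (W_k^t)_ij yields a
   directed path from j to i in the digraph of W_k. *)

Section MatrixEntries.
Context {R : realType}.

Lemma mx_entry_le_norm {p q : nat} (M : 'M[R]_(p, q)) i j : `|M i j| <= `|M|.
Proof.
have -> : `|M| = mx_norm M by [].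
by rewrite mx_normrE; apply/bigmax_geP; right; exists (i, j).
Qed.

Lemma cvg_mx_entry {T : Type} {F : set_system T} {FF : Filter F} {p q : nat}
    {f : T -> 'M[R]_(p, q)} {L : 'M[R]_(p, q)} i j :
  f x @[x --> F] --> L -> f x i j @[x --> F] --> L i j.
Proof.
move=> /cvgrPdist_lt fL; apply/cvgrPdist_lt => e e0.
apply: filterS (fL e e0) => x; apply: le_lt_trans.
by have := mx_entry_le_norm (L - f x) i j; rewrite !mxE.
Qed.

End MatrixEntries.

Lemma traj_cst {R : realType} {n m : nat} (W : 'I_m -> 'M[R]_n) k x0 t :
  traj W (fun=> k) x0 t = W k ^+ t *m x0.
Proof.
elim: t => [|t IH] /=; first by rewrite expr0 mul1mx.
by rewrite IH mulmxA exprS.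
Qed.

Lemma col_sum_exp {R : comNzRingType} {n : nat} (A : 'M[R]_n) t j :
  (forall j, \sum_i A i j = 1) -> \sum_i (A ^+ t) i j = 1.
Proof.
move=> A1; elim: t j => [|t IH] j.
  rewrite expr0 (bigD1 j) //= big1 ?mxE ?eqxx ?addr0 // => i ji.
  by rewrite mxE (negPf ji).
rewrite exprSr; under eq_bigr do rewrite mxE.
by rewrite exchange_big /=; under eq_bigr do rewrite -mulr_suml IH mul1r.
Qed.

Section ColumnStochastic.
Context {R : realType} {n : nat} {A : 'M[R]_n}.

Lemma col_sums_one_trmx : A^T *m ones R n = ones R n -> forall j, \sum_i A i j = 1.
Proof.
move=> /matrixP A1 j; have := A1 j 0; rewrite !mxE => <-.
by apply: eq_bigr => i _; rewrite !mxE mulr1.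
Qed.

Lemma cvg_col_exp_entry {j : 'I_n} {a : R} i :
  col j (A ^+ t) @[t --> \oo] --> a *: ones R n -> (A ^+ t) i j @[t --> \oo] --> a.
Proof.
move=> colA; have colAij : (fun t => col j (A ^+ t) i 0) = (fun t => (A ^+ t) i j).
  by apply/funext => t; rewrite mxE.
by have /(_ _) := cvg_mx_entry i 0 colA; rewrite colAij !mxE mulr1.
Qed.

Hypothesis col_sums_one : forall j, \sum_i A i j = 1.

Lemma cvg_col_exp_scale {j : 'I_n} {a : R} :
  col j (A ^+ t) @[t --> \oo] --> a *: ones R n -> a *+ n = 1.
Proof.
move=> colA; have : \sum_i (A ^+ t) i j @[t --> \oo] --> \sum_(i < n) a.
  apply: cvg_big => [|i _]; first exact: add_continuous.
  exact: cvg_col_exp_entry colA.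
rewrite sumr_const card_ord (eq_cvg _ _ (fun t => col_sum_exp A t j col_sums_one)).
by move/cvg_lim => <-//; rewrite lim_cst.
Qed.

Lemma eventually_positive_of_cvg_cols :
  (forall j, exists a, col j (A ^+ t) @[t --> \oo] --> a *: ones R n) ->
  eventually_positive A.
Proof.
move=> cvg_cols.
suff [t0 _ A_gt0] : \forall t \near \oo, forall j i, 0 < (A ^+ t) i j.
  by exists t0 => t /A_gt0.
apply: filter_forall => j; have [a colA] := cvg_cols j.
have a_gt0 : 0 < a.
  have n_gt0 : (0 < n)%N := leq_ltn_trans (leq0n j) (ltn_ord j).
  by rewrite -(pmulrn_lgt0 _ n_gt0) (cvg_col_exp_scale colA) ltr01.
by apply: filter_forall => i; exact: cvgr_gt (cvg_col_exp_entry i colA) _ a_gt0.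
Qed.

End ColumnStochastic.

Lemma connect_of_exp_neq0 (R : realType) (n : nat) (A : 'M[R]_n) t i j :
  (A ^+ t) i j != 0 -> connect (digraph_edge A) j i.
Proof.
elim: t i => [|t IH] i.
  by rewrite expr0 mxE; case: (eqVneq i j) => [-> _|]; [exact: connect0 | rewrite eqxx].
rewrite exprS mxE; case: (pickP (fun l => A i l * (A ^+ t) l j != 0)) => [l|all0].
  rewrite mulf_eq0 negb_or => /andP[Ail Atlj] _.
  exact: connect_trans (IH _ Atlj) (connect1 Ail).
by rewrite big1 ?eqxx // => l _; apply/eqP; rewrite -[_ == 0]negbK all0.
Qed.

Lemma strongly_connected_of_eventually_positive (R : realType) (n : nat) (A : 'M[R]_n) :
  eventually_positive A -> strongly_connected A.
Proof.
move=> [t0 A_gt0] j i; apply: (@connect_of_exp_neq0 _ _ _ t0).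
exact/lt0r_neq0/A_gt0.
Qed.

Theorem corollary5 (R : realType) (n m : nat) (W : 'I_m -> 'M[R]_n) :
  (forall k : 'I_m, row_col_sums_one (W k)) ->
  consensus_set W ->
  forall k : 'I_m,
    eventually_doubly_stochastic (W k) /\ eventually_positive (W k) /\
    strongly_connected (W k).
Proof.
move=> sums_one consensus k; have [_ col_sums] := sums_one k.
have Wk_pos : eventually_positive (W k).
  apply: (eventually_positive_of_cvg_cols (col_sums_one_trmx col_sums)) => j.
  have [a Ha] := consensus (fun=> k) (delta_mx j 0); exists a.
  have -> : (fun t => col j (W k ^+ t)) = traj W (fun=> k) (delta_mx j 0).
    by apply/funext => t; rewrite traj_cst colE.
  exact: Ha.
split; first by split.
by split; last exact: strongly_connected_of_eventually_positive.
Qed.
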